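(* Fix $h\in\{2,\dots,H\}$ and suppose $\Psi_{h-1}$ is an $\alpha$-policy cover of $\mathcal{S}_{h-1}$ with $|\Psi_{h-1}|\le N$. Then for every $s\in\mathcal{S}_h$, $\rho_h(s)\ge\frac{\alpha\,\eta(s)}{N|\mathcal{A}|}$.
   Context: Block MDP: horizon $H$; finite latent states $\mathcal{S}=\sqcup_h\mathcal{S}_h$; countable observations $\mathcal{X}=\sqcup_h\mathcal{X}_h$; finite actions $\mathcal{A}$; start distribution $\mu$; transitions $T(\cdot\mid s,a)\in\Delta(\mathcal{S}_{h+1})$ for $s\in\mathcal{S}_h$; emissions $q(\cdot\mid s)\in\Delta(\mathcal{X}_h)$ with disjoint supports, decoder $g^\star$. Policies map $\mathcal{X}\to\Delta(\mathcal{A})$; $\Pi$ a policy class, $\Pi_{NS}=\Pi^H$ non-stationary policies. $\mathbb{P}_\pi[s]$ is the probability that $\pi$'s trajectory visits $s$; $\eta(s)=\max_{\pi\in\Pi_{NS}}\mathbb{P}_\pi[s]$. A finite set $\Psi$ of policies is an $\alpha$-policy cover of $\mathcal{S}_t$ if $\max_{\pi\in\Psi}\mathbb{P}_\pi[s]\ge\alpha\eta(s)$ for all $s\in\mathcal{S}_t$. $\rho_h(s)$ is the probability that $g^\star(x_h)=s$ when a policy $\pi$ is chosen uniformly from $\Psi_{h-1}$, followed for steps $1,\dots,h-2$ to reach $x_{h-1}$, then an action $a_{h-1}\sim\mathrm{Unf}(\mathcal{A})$ is taken. *)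

From HB Require Import structures.
From mathcomp Require Import all_boot all_order all_algebra.
From mathcomp Require Import boolp classical_sets functions reals ereal esum.
Set Implicit Arguments. Unset Strict Implicit. Unset Printing Implicit Defensive.
Import Order.TTheory GRing.Theory Num.Theory.
Local Open Scope classical_set_scope.
Local Open Scope ring_scope.

Definition csum (R : realType) (T : choiceType) (f : T -> R) : R :=
  fine (\esum_(x in [set: T]) (f x)%:E).

Record blockMDP (R : realType) (H : nat) := BlockMDP {
  St : finType;
  Obs : countType;
  Act : finType;
  slay : St -> nat;             (* s \in S_(slay s) *)
  olay : Obs -> nat;            (* x \in X_(olay x) *)
  mu : St -> R;
  T : St -> Act -> St -> R;     (* T s a s' = T(s' | s, a) *)
  q : St -> Obs -> R;           (* q s x = q(x | s) *)
  dec : Obs -> St;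
  slay_range : forall s, (1 <= slay s <= H)%N;
  mu_ge0 : forall s, 0 <= mu s;
  mu_sum1 : \sum_(s : St) mu s = 1;
  mu_supp : forall s, 0 < mu s -> slay s = 1%N;
  T_ge0 : forall s a s', 0 <= T s a s';
  T_sum1 : forall s a, (slay s < H)%N -> \sum_(s' : St) T s a s' = 1;
  T_supp : forall s a s', 0 < T s a s' -> slay s' = (slay s).+1;
  q_ge0 : forall s x, 0 <= q s x;
  q_sum1 : forall s, (\esum_(x in [set: Obs]) (q s x)%:E = 1)%E;
  q_supp : forall s x, 0 < q s x -> olay x = slay s;
  (* disjoint supports of emissions, witnessed by the decoder g* *)
  dec_spec : forall s x, 0 < q s x -> dec x = s
}.

Section Defs.
Variables (R : realType) (H : nat) (M : blockMDP R H).

Definition policy := Obs M -> Act M -> R.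
Definition isPolicy (pi : policy) : Prop :=
  (forall x a, 0 <= pi x a) /\ (forall x, \sum_(a : Act M) pi x a = 1).

(* Non-stationary policies: pi t is used at step t (t = 1..H). *)
Definition nspolicy := nat -> policy.

Definition PiNS (Pi : set policy) : set nspolicy :=
  [set pi | forall t, (1 <= t <= H)%N -> Pi (pi t)].

(* occ pi t s = probability that the latent state at step t is s, when
   following pi: s_1 ~ mu, x_t ~ q(.|s_t), a_t ~ pi_t(.|x_t),
   s_(t+1) ~ T(.|s_t,a_t). *)
Fixpoint occ (pi : nspolicy) (t : nat) (s : St M) : R :=
  match t with
  | 0 => 0
  | t'.+1 =>
    if t' is 0 then mu s
    else \sum_(s0 : St M) occ pi t' s0 *
           csum (fun x => q s0 x *
                   \sum_(a : Act M) pi t' x a * T s0 a s)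
  end.

(* P_pi[s] : probability that the trajectory of pi visits s
   (states of layer h can only be visited at step h). *)
Definition visitP (pi : nspolicy) (s : St M) : R := occ pi (slay s) s.

(* eta(s) = max over Pi_NS of P_pi[s] (taken as a supremum). *)
Definition etaS (Pi : set policy) (s : St M) : R :=
  sup [set visitP pi s | pi in PiNS Pi].

(* Psi (a finite set of n policies, given as an injective family) is an
   alpha-policy cover of S_t. *)
Definition policy_cover (Pi : set policy) n (Psi : 'I_n -> nspolicy)
  (alpha : R) (t : nat) : Prop :=
  forall s : St M, slay s = t ->
    \big[Num.max/0]_(i < n) visitP (Psi i) s >= alpha * etaS Pi s.

(* rho_h(s): pi uniform in Psi, followed for steps 1..h-2 (reaching
   s_(h-1) and x_(h-1) ~ q(.|s_(h-1))), then a_(h-1) ~ Unf(A),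
   s_h ~ T(.|s_(h-1),a_(h-1)), x_h ~ q(.|s_h); probability that g*(x_h) = s. *)
Definition rho n (Psi : 'I_n -> nspolicy) (h : nat) (s : St M) : R :=
  n%:R^-1 * \sum_(i < n) \sum_(s1 : St M) occ (Psi i) h.-1 s1 *
    csum (fun x => q s1 x *
      (#|Act M|%:R^-1 * \sum_(a : Act M) \sum_(s2 : St M) T s1 a s2 *
          csum (fun y => q s2 y * (dec y == s)%:R))).

End Defs.

From HB Require Import structures.
From mathcomp Require Import all_boot all_order all_algebra.
From mathcomp Require Import boolp classical_sets functions reals ereal esum.
From mathcomp Require Import fsbigop.
Set Implicit Arguments. Unset Strict Implicit. Unset Printing Implicit Defensive.
Import Order.TTheory GRing.Theory Num.Theory.
Local Open Scope classical_set_scope.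
Local Open Scope ring_scope.

(** Unfolding one step of the dynamics, any policy reaches a state [s] of
  layer [h] with probability at most [sum_s1 eta(s1) sum_a T(s | s1, a)], the
  sum over [s1] in layer [h-1]. The cover visits each such [s1] with
  probability at least [alpha eta(s1)] under one of its [n <= N] policies, so
  the sum of their visitation probabilities dominates [alpha eta(s1)]; [rho]
  picks each policy with probability [1/n] and each action with probability
  [1/|A|], and decodes exactly since emissions have disjoint supports. *)

Lemma ge0_esumZl (R : realType) (T : choiceType) (c : R) (a : T -> \bar R) :
  0 <= c -> (forall x, 0 <= a x)%E ->
  (\esum_(x in [set: T]) (c%:E * a x) = c%:E * \esum_(x in [set: T]) a x)%E.
Proof.
move=> c0 a0; rewrite /esum -ereal_supZl//; last first.
  by apply/set0P; exists 0%E; exists set0; [exact: fsets_set0|rewrite fsbig_set0].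
congr ereal_sup; apply/seteqP; split=> y /=.
  by move=> [A hA <-]; exists (\sum_(i \in A) a i)%E; [exists A|rewrite ge0_mule_fsumr].
by move=> [z [A hA <-] <-]; exists A => //; rewrite ge0_mule_fsumr.
Qed.

Lemma csum_ge0 (R : realType) (T : choiceType) (f : T -> R) :
  (forall x, 0 <= f x) -> 0 <= csum f.
Proof. by move=> f0; apply: fine_ge0; apply: esum_ge0 => x _; rewrite lee_fin. Qed.

Section CsumDistribution.
Variables (R : realType) (T : choiceType) (p : T -> R).
Hypotheses (p_ge0 : forall x, 0 <= p x)
           (p_sum1 : (\esum_(x in [set: T]) (p x)%:E = 1)%E).

Lemma esum_mulr_cst (c : R) : 0 <= c ->
  (\esum_(x in [set: T]) (p x * c)%:E = c%:E)%E.
Proof.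
move=> c0; under eq_esum => x _ do rewrite mulrC EFinM.
by rewrite ge0_esumZl ?p_sum1 ?mule1 // => x; rewrite lee_fin.
Qed.

Lemma csum_mulr_cst (c : R) : 0 <= c -> csum (fun x => p x * c) = c.
Proof. by move=> c0; rewrite /csum esum_mulr_cst. Qed.

Lemma csum_mulr_le (g : T -> R) (c : R) : 0 <= c ->
  (forall x, 0 <= g x <= c) -> csum (fun x => p x * g x) <= c.
Proof.
move=> c0 g_bnd.
have pg0 x : 0 <= p x * g x by rewrite mulr_ge0 //; case/andP: (g_bnd x).
have le_c : (\esum_(x in [set: T]) (p x * g x)%:E <= c%:E)%E.
  rewrite -(esum_mulr_cst c0); apply: le_esum => x _.
  by rewrite lee_fin ler_wpM2l //; case/andP: (g_bnd x).
have esum0 : (0 <= \esum_(x in [set: T]) (p x * g x)%:E)%E.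
  by apply: esum_ge0 => x _; rewrite lee_fin.
rewrite -lee_fin /csum fineK // ge0_fin_numE //.
exact: le_lt_trans le_c (ltry c).
Qed.

End CsumDistribution.

Section Dynamics.
Variables (R : realType) (H : nat) (M : blockMDP R H).

Lemma T_out_of_layer (s : St M) a (s' : St M) :
  slay s' != (slay s).+1 -> T s a s' = 0.
Proof.
move=> hs; apply/eqP; rewrite eq_le T_ge0 andbT leNgt; apply/negP => /T_supp.
by move/eqP; rewrite (negbTE hs).
Qed.

Lemma T_le1 (s : St M) a (s' : St M) : T s a s' <= 1.
Proof.
have [lt_sH|le_Hs] := ltnP (slay s) H.
  by rewrite -(T_sum1 a lt_sH) (bigD1 s') //= lerDl sumr_ge0 // => ? _; apply: T_ge0.
rewrite T_out_of_layer ?ler01 //; apply/eqP => e.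
by move: (slay_range s'); rewrite e => /andP[_]; rewrite ltnNge le_Hs.
Qed.

Lemma mu_le1 (s : St M) : mu s <= 1.
Proof. by rewrite -(mu_sum1 M) (bigD1 s) //= lerDl sumr_ge0 // => ? _; apply: mu_ge0. Qed.

Lemma isPolicy_le1 (p : policy M) x a : isPolicy p -> p x a <= 1.
Proof. by case=> p0 p1; rewrite -(p1 x) (bigD1 a) //= lerDl sumr_ge0. Qed.

Definition trans_mass (s0 s : St M) : R := \sum_(a : Act M) T s0 a s.

Lemma trans_mass_ge0 (s0 s : St M) : 0 <= trans_mass s0 s.
Proof. by apply: sumr_ge0 => a _; apply: T_ge0. Qed.

Lemma trans_mass_out_of_layer (s0 s : St M) :
  slay s != (slay s0).+1 -> trans_mass s0 s = 0.
Proof. by move=> hs; apply: big1 => a _; apply: T_out_of_layer. Qed.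

Definition step (p : policy M) (s0 s : St M) : R :=
  csum (fun x => q s0 x * \sum_(a : Act M) p x a * T s0 a s).

Lemma occSS (pi : nspolicy M) t (s : St M) :
  occ pi t.+2 s = \sum_(s0 : St M) occ pi t.+1 s0 * step (pi t.+1) s0 s.
Proof. by []. Qed.

Section PolicyStep.
Variables (p : policy M) (s0 s : St M).
Hypothesis p_policy : isPolicy p.

Let p_ge0 x a : 0 <= p x a. Proof. by case: p_policy. Qed.

Let act_sum_ge0 x : 0 <= \sum_(a : Act M) p x a * T s0 a s.
Proof. by apply: sumr_ge0 => a _; rewrite mulr_ge0 ?T_ge0. Qed.

Lemma step_le_trans_mass : step p s0 s <= trans_mass s0 s.
Proof.
apply: csum_mulr_le (q_ge0 s0) (q_sum1 s0) _ _ (trans_mass_ge0 _ _) _ => x.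
rewrite act_sum_ge0; apply: ler_sum => a _.
by rewrite ler_piMl ?T_ge0 ?isPolicy_le1.
Qed.

Lemma step_le1 : step p s0 s <= 1.
Proof.
apply: csum_mulr_le (q_ge0 s0) (q_sum1 s0) _ _ ler01 _ => x.
rewrite act_sum_ge0 -(proj2 p_policy x); apply: ler_sum => a _.
by rewrite ler_piMr ?T_le1.
Qed.

Lemma step_ge0 : 0 <= step p s0 s.
Proof. by apply: csum_ge0 => x; rewrite mulr_ge0 ?q_ge0. Qed.

End PolicyStep.

Lemma occ_bounded (pi : nspolicy M) t :
  (forall t', (0 < t' < t)%N -> isPolicy (pi t')) ->
  forall s, 0 <= occ pi t s <= (#|St M|%:R + 1) ^+ t.
Proof.
elim: t => [|[|t] IH] pi_policy s; first by rewrite lexx ler01.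
  by rewrite /= mu_ge0 expr1 (le_trans (mu_le1 s)) // lerDr.
have p_t1 : isPolicy (pi t.+1) by apply: pi_policy; rewrite /= ltnSn.
have {}IH s0 : 0 <= occ pi t.+1 s0 <= (#|St M|%:R + 1) ^+ t.+1.
  by apply: IH => t' /andP[t'0 t't]; apply: pi_policy; rewrite t'0 ltnW.
rewrite occSS sumr_ge0 => [/=|s0 _]; last first.
  by rewrite mulr_ge0 ?step_ge0 //; case/andP: (IH s0).
apply: (@le_trans _ _ (\sum_(s0 : St M) (#|St M|%:R + 1) ^+ t.+1)).
  apply: ler_sum => s0 _; case/andP: (IH s0) => occ0 occ_le.
  by rewrite -[leRHS]mulr1 ler_pM ?step_ge0 ?step_le1.
rewrite sumr_const [leRHS]exprSr; set C := _ ^+ t.+1; rewrite -(mulr_natr C).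
by apply: ler_wpM2l; rewrite ?exprn_ge0 ?addr_ge0 ?lerDl.
Qed.

Lemma occ_ge0 (pi : nspolicy M) t (s : St M) :
  (forall t', (0 < t' < t)%N -> isPolicy (pi t')) -> 0 <= occ pi t s.
Proof. by move=> pi_policy; case/andP: (occ_bounded pi_policy s). Qed.

Lemma csum_emission_decode (s2 s : St M) :
  csum (fun y => q s2 y * (dec y == s)%:R) = (s2 == s)%:R.
Proof.
rewrite -[RHS](csum_mulr_cst (q_ge0 s2) (q_sum1 s2)) ?ler0n //.
congr csum; apply/funext => y.
have := q_ge0 s2 y; rewrite le_eqVlt => /orP[/eqP <-|/dec_spec -> //].
by rewrite !mul0r.
Qed.

End Dynamics.

Section OptimalVisitation.
Variables (R : realType) (H : nat) (M : blockMDP R H) (Pi : set (policy M)).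
Hypothesis Pi_policy : Pi `<=` @isPolicy R H M.

Lemma PiNS_isPolicy (pi : nspolicy M) (s : St M) : PiNS Pi pi ->
  forall t, (0 < t < slay s)%N -> isPolicy (pi t).
Proof.
move=> piNS t /andP[t0 lt_ts]; apply/Pi_policy/piNS; rewrite t0 /=.
by case/andP: (slay_range s) => _ /(leq_trans lt_ts)/ltnW.
Qed.

Lemma visitP_ge0 (pi : nspolicy M) (s : St M) : PiNS Pi pi -> 0 <= visitP pi s.
Proof. by move=> piNS; apply/occ_ge0/PiNS_isPolicy. Qed.

Lemma visitP_le_etaS (pi : nspolicy M) (s : St M) : PiNS Pi pi ->
  visitP pi s <= etaS Pi s.
Proof.
move=> piNS; apply: ub_le_sup; last by exists pi.
exists ((#|St M|%:R + 1) ^+ slay s) => _ [pi' pi'NS <-].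
by case/andP: (occ_bounded (PiNS_isPolicy (s:=s) pi'NS) s).
Qed.

Lemma etaS_empty (s : St M) : ~ (exists pi, PiNS Pi pi) -> etaS Pi s = 0.
Proof.
move=> noPi; rewrite /etaS; suff -> : [set visitP pi s | pi in PiNS Pi] = set0 by rewrite sup0.
by apply/seteqP; split => // y [pi piNS _]; apply: noPi; exists pi.
Qed.

Lemma etaS_ge0 (s : St M) : 0 <= etaS Pi s.
Proof.
have [[pi piNS]|noPi] := pselect (exists pi, PiNS Pi pi); last by rewrite etaS_empty.
exact: le_trans (visitP_ge0 s piNS) (visitP_le_etaS s piNS).
Qed.

Lemma etaS_le (s : St M) (E : R) : 0 <= E ->
  (forall pi, PiNS Pi pi -> visitP pi s <= E) -> etaS Pi s <= E.
Proof.
move=> E0 visit_le.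
have [[pi piNS]|noPi] := pselect (exists pi, PiNS Pi pi); last by rewrite etaS_empty.
apply: ge_sup; first by exists (visitP pi s), pi.
by move=> _ [pi' pi'NS <-]; apply: visit_le.
Qed.

Lemma visitP_le_pred (pi : nspolicy M) (s : St M) : PiNS Pi pi -> (1 < slay s)%N ->
  visitP pi s <= \sum_(s0 : St M) etaS Pi s0 * trans_mass s0 s.
Proof.
move=> piNS; rewrite /visitP; case es: (slay s) => [|[|t]] // _.
have pi_policy := PiNS_isPolicy (s:=s) piNS; rewrite es in pi_policy.
rewrite occSS; apply: ler_sum => s0 _.
have occ0 : 0 <= occ pi t.+1 s0.
  by apply: occ_ge0 => t' /andP[t'0 t't]; apply: pi_policy; rewrite t'0 ltnW.
have p_t1 : isPolicy (pi t.+1) by apply: pi_policy; rewrite /= ltnSn.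
apply: le_trans (ler_wpM2l occ0 (step_le_trans_mass s0 s p_t1)) _.
have [es0|ns0] := eqVneq (slay s0) t.+1.
  by apply: ler_wpM2r; [exact: trans_mass_ge0|rewrite -es0; exact: visitP_le_etaS].
by rewrite trans_mass_out_of_layer ?es ?eqSS 1?eq_sym // !mulr0.
Qed.

Lemma etaS_le_pred (s : St M) : (1 < slay s)%N ->
  etaS Pi s <= \sum_(s0 : St M) etaS Pi s0 * trans_mass s0 s.
Proof.
move=> s_gt1; apply: etaS_le => [|pi piNS]; last exact: visitP_le_pred.
by apply: sumr_ge0 => s0 _; rewrite mulr_ge0 ?etaS_ge0 ?trans_mass_ge0.
Qed.

End OptimalVisitation.

Lemma bigmax_le_sum (R : realDomainType) (I : finType) (F : I -> R) :
  (forall i, 0 <= F i) -> \big[Num.max/0]_(i : I) F i <= \sum_(i : I) F i.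
Proof.
move=> F0; apply: bigmax_le => [|i _]; first exact: sumr_ge0.
by rewrite (bigD1 i) //= lerDl sumr_ge0.
Qed.

Section Exploration.
Variables (R : realType) (H : nat) (M : blockMDP R H) (Pi : set (policy M)).
Hypothesis Pi_policy : Pi `<=` @isPolicy R H M.
Variables (n : nat) (Psi : 'I_n -> nspolicy M).
Hypothesis Psi_policy : forall i t, isPolicy (Psi i t).

Let Psi_occ_ge0 i t (s : St M) : 0 <= occ (Psi i) t s.
Proof. exact: occ_ge0. Qed.

Definition cover_mass (h : nat) (s : St M) : R :=
  \sum_(i < n) \sum_(s1 : St M) occ (Psi i) h.-1 s1 * trans_mass s1 s.

Lemma cover_mass_ge0 h (s : St M) : 0 <= cover_mass h s.
Proof.
by apply: sumr_ge0 => i _; apply: sumr_ge0 => s1 _; rewrite mulr_ge0 ?trans_mass_ge0.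
Qed.

Lemma rhoE h (s : St M) :
  rho Psi h s = n%:R^-1 * (#|Act M|%:R^-1 * cover_mass h s).
Proof.
rewrite /rho /cover_mass; congr (_ * _); rewrite mulr_sumr; apply: eq_bigr => i _.
rewrite mulr_sumr; apply: eq_bigr => s1 _; rewrite mulrCA; congr (_ * _).
have -> : \sum_(a : Act M) \sum_(s2 : St M) T s1 a s2 *
    csum (fun y => q s2 y * (dec y == s)%:R) = trans_mass s1 s.
  apply: eq_bigr => a _; under eq_bigr => s2 _ do rewrite csum_emission_decode.
  rewrite (bigD1 s) //= eqxx mulr1 big1 ?addr0 // => s2 /negbTE ->.
  by rewrite mulr0.
by rewrite (csum_mulr_cst (q_ge0 s1) (q_sum1 s1)) // mulr_ge0 ?invr_ge0 ?trans_mass_ge0.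
Qed.

Lemma rho_ge0 h (s : St M) : 0 <= rho Psi h s.
Proof. by rewrite rhoE !mulr_ge0 ?invr_ge0 ?cover_mass_ge0. Qed.

Lemma cover_mass_div_le_rho (N : nat) h (s : St M) : (n <= N)%N ->
  cover_mass h s / (N%:R * #|Act M|%:R) <= rho Psi h s.
Proof.
rewrite rhoE => le_nN; have [n0|n_gt0] := posnP n.
  have -> : cover_mass h s = 0 by rewrite /cover_mass big1 // => i; move: (ltn_ord i); rewrite [X in (_ < X)%N]n0.
  by rewrite !mul0r mulr0.
rewrite [leRHS]mulrA [leRHS]mulrC invfM; apply: ler_wpM2l; first exact: cover_mass_ge0.
apply: ler_wpM2r; first by rewrite invr_ge0.
by rewrite lef_pV2 ?ler_nat // posrE ltr0n // (leq_trans n_gt0).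
Qed.

Lemma policy_cover_le_sum alpha t : policy_cover Pi Psi alpha t ->
  forall s1 : St M, slay s1 = t -> alpha * etaS Pi s1 <= \sum_(i < n) visitP (Psi i) s1.
Proof.
move=> cover s1 es1; apply: le_trans (cover s1 es1) _.
by apply: bigmax_le_sum => i; apply: Psi_occ_ge0.
Qed.

Lemma cover_mass_ge alpha h (s : St M) : 0 <= alpha ->
  policy_cover Pi Psi alpha h.-1 -> slay s = h -> (1 < h)%N ->
  alpha * etaS Pi s <= cover_mass h s.
Proof.
move=> alpha0 cover es h_gt1; rewrite /cover_mass exchange_big /=.
have s_gt1 : (1 < slay s)%N by rewrite es.
apply: le_trans (ler_wpM2l alpha0 (etaS_le_pred Pi_policy s_gt1)) _.
rewrite mulr_sumr; apply: ler_sum => s1 _; rewrite mulrA -mulr_suml.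
have [es1|ns1] := eqVneq (slay s) (slay s1).+1; last first.
  by rewrite trans_mass_out_of_layer // !mulr0.
apply: ler_wpM2r; first exact: trans_mass_ge0.
have e1 : slay s1 = h.-1 by rewrite -es es1.
by have := policy_cover_le_sum cover e1; rewrite /visitP e1.
Qed.

End Exploration.

Theorem mainTheorem9 (R : realType) (H : nat) (M : blockMDP R H)
  (Pi : set (policy M)) (hPi : Pi `<=` @isPolicy R H M)
  (h : nat) (hh : (2 <= h <= H)%N)
  (alpha : R) (N n : nat) (Psi : 'I_n -> nspolicy M)
  (Psi_set : injective Psi)
  (Psi_valid : forall i t, isPolicy (Psi i t))
  (hN : (n <= N)%N)
  (hcover : policy_cover Pi Psi alpha h.-1) :
  forall s : St M, slay s = h ->
    rho Psi h s >= alpha * etaS Pi s / (N%:R * #|Act M|%:R).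
Proof.
move=> s es; have [alpha_le0|alpha_gt0] := lerP alpha 0.
  apply: le_trans (rho_ge0 Psi_valid h s).
  by rewrite mulr_le0_ge0 ?invr_ge0 ?mulr_ge0 // mulr_le0_ge0 ?etaS_ge0.
apply: le_trans (cover_mass_div_le_rho Psi_valid h s hN).
apply: ler_wpM2r; first by rewrite invr_ge0 mulr_ge0.
have h_gt1 : (1 < h)%N by case/andP: hh.
exact: (cover_mass_ge hPi Psi_valid (ltW alpha_gt0) hcover es h_gt1).
Qed.
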